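(* Let $c_0,c_1,c_2,c_3$ be numbers, not all zero, let $\{V_n\}_{n\in\mathbb Z}$ be the generalized Tetranacci sequence with $V_j=c_j$ ($j=0,1,2,3$), and let $GV_n=V_n+iV_{n-1}$ for all integers $n$ (the Gaussian generalized Tetranacci numbers). Let $\alpha,\beta,\gamma,\delta$ be the four roots of $x^4-x^3-x^2-x-1=0$ and set, for $r\in\{\alpha,\beta,\gamma,\delta\}$, $$K_r=\frac{r-1}{5r-8}\bigl(V_3r^3+(V_0+V_1+V_2)r^2+(V_1+V_2)r+V_2\bigr),$$ and $A=K_\alpha$, $B=K_\beta$, $C=K_\gamma$, $D=K_\delta$. Then for every integer $n$, $$GV_n=\left(A\alpha^{n-6}+B\beta^{n-6}+C\gamma^{n-6}+D\delta^{n-6}\right)+i\left(A\alpha^{n-7}+B\beta^{n-7}+C\gamma^{n-7}+D\delta^{n-7}\right).$$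
   Context: The generalized Tetranacci sequence is defined by $V_n=V_{n-1}+V_{n-2}+V_{n-3}+V_{n-4}$ with initial values $V_0,V_1,V_2,V_3$, and is extended to negative indices by $V_{n-4}=V_n-V_{n-1}-V_{n-2}-V_{n-3}$, so the recurrence holds for all integers $n$. Equivalently, $GV_n$ satisfies the same recurrence with $GV_0=c_0+i(c_3-c_2-c_1-c_0)$, $GV_1=c_1+ic_0$, $GV_2=c_2+ic_1$, $GV_3=c_3+ic_2$. *)

(* Numbers live in an arbitrary numeric closed field C
   (e.g. the complex numbers), which has the imaginary unit 'i. *)
From HB Require Import structures.
From mathcomp Require Import all_boot all_order all_algebra.
Set Implicit Arguments. Unset Strict Implicit. Unset Printing Implicit Defensive.
Import Order.TTheory GRing.Theory Num.Theory.
Local Open Scope ring_scope.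

Definition tetranacci_rec (C : ringType) (V : int -> C) : Prop :=
  forall n : int, V (n + 4) = V (n + 3) + V (n + 2) + V (n + 1) + V n.

Definition GV (C : numClosedFieldType) (V : int -> C) (n : int) : C :=
  V n + 'i * V (n - 1).

Definition Kcoef (C : fieldType) (V : int -> C) (r : C) : C :=
  (r - 1) / (5 * r - 8) *
  (V 3 * r ^+ 3 + (V 0 + V 1 + V 2) * r ^+ 2 + (V 1 + V 2) * r + V 2).

From HB Require Import structures.
From mathcomp Require Import all_boot all_order all_algebra ring.
Import Order.TTheory GRing.Theory Num.Theory.
Set Implicit Arguments. Unset Strict Implicit. Unset Printing Implicit Defensive.
Local Open Scope ring_scope.

(* Let p = x^4 - x^3 - x^2 - x - 1 and attach to every index m the cubic
   R_m(x) = [tetra_window V m x]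
          = V_m x^3 + (V_{m+1} - V_m) x^2 + (V_{m+2} - V_{m+1} - V_m) x
            + (V_{m+3} - V_{m+2} - V_{m+1} - V_m).
   The recurrence gives x R_m = R_{m+1} + V_m p, so R_m(r) = r^(m-3) R_3(r) at
   every root r, and R_3 is the cubic occurring in K_r.  Since
   (r - 1) p'(r) = r^3 (5 r - 8) modulo p, this yields K_r r^(m-6) = R_m(r) / p'(r).
   The roots of p are simple, so summing over them is Lagrange interpolation,
   which returns the leading coefficient V_m of R_m. *)

Lemma int_shift_invariant (T : Type) (f : int -> T) :
  (forall m, f (m + 1) = f m) -> forall m, f m = f 0.
Proof.
move=> fS; elim/int_rect => [//|n IHn|n IHn].
- by rewrite intS addrC fS.
- by rewrite -IHn -[in RHS](subrK 1 (- n%:Z)) fS -opprD addrC -intS.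
Qed.

Section Window.
Variables (R : comNzRingType) (V : int -> R).
Hypothesis hV : tetranacci_rec V.

Definition tetra_window (m : int) (x : R) : R :=
  V m * x ^+ 3 + (V (m + 1) - V m) * x ^+ 2 + (V (m + 2) - V (m + 1) - V m) * x
  + (V (m + 3) - V (m + 2) - V (m + 1) - V m).

Lemma tetra_windowS m x :
  x * tetra_window m x
  = tetra_window (m + 1) x + V m * (x ^+ 4 - x ^+ 3 - x ^+ 2 - x - 1).
Proof.
rewrite /tetra_window.
have -> : m + 1 + 1 = m + 2 by rewrite -addrA.
have -> : m + 1 + 2 = m + 3 by rewrite -addrA.
have -> : m + 1 + 3 = m + 4 by rewrite -addrA.
rewrite hV.
ring.
Qed.

Lemma tetra_window3 x :
  tetra_window 3 x
  = V 3 * x ^+ 3 + (V 0 + V 1 + V 2) * x ^+ 2 + (V 1 + V 2) * x + V 2.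
Proof.
have V4 : V 4 = V 3 + V 2 + V 1 + V 0 := hV 0.
have V5 : V 5 = V 4 + V 3 + V 2 + V 1 := hV 1.
have V6 : V 6 = V 5 + V 4 + V 3 + V 2 := hV 2.
rewrite /tetra_window V6 V5 V4.
ring.
Qed.
End Window.

Section TetraRoot.
Variables (F : numFieldType) (r : F).
Hypothesis hr : r ^+ 4 = r ^+ 3 + r ^+ 2 + r + 1.

Lemma tetra_root_neq0 : r != 0.
Proof.
apply/eqP => r0.
have : r * (r ^+ 3 - r ^+ 2 - r - 1) = 1 by ring: hr.
by rewrite r0 mul0r => /eqP; rewrite eq_sym oner_eq0.
Qed.

Lemma tetra_root_neq1 : r != 1.
Proof.
apply: contra_eq_neq hr => ->.
rewrite !expr1n -subr_eq0.
have -> : 1 - (1 + 1 + 1 + 1) = - 3%:R :> F by ring.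
by rewrite oppr_eq0 pnatr_eq0.
Qed.

(* 563 is minus the discriminant of x^4 - x^3 - x^2 - x - 1; the cofactor
   comes from a Bezout relation between this polynomial and its derivative. *)
Lemma tetra_root_simple : 4 * r ^+ 3 - 3 * r ^+ 2 - 2 * r - 1 != 0.
Proof.
apply/eqP => d0.
have : (10 + 157 * r - 103 * r ^+ 2 + 16 * r ^+ 3)
       * (4 * r ^+ 3 - 3 * r ^+ 2 - 2 * r - 1) = 563%:R by ring: hr.
by rewrite d0 mulr0 => /eqP; rewrite eq_sym pnatr_eq0.
Qed.

Lemma tetra_root_ratio :
  (r - 1) / (5 * r - 8) = r ^+ 3 / (4 * r ^+ 3 - 3 * r ^+ 2 - 2 * r - 1).
Proof.
have key : (r - 1) * (4 * r ^+ 3 - 3 * r ^+ 2 - 2 * r - 1) = r ^+ 3 * (5 * r - 8)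
  by ring: hr.
have r1 : r - 1 != 0 by rewrite subr_eq0 tetra_root_neq1.
have r58 : 5 * r - 8 != 0.
  apply: contra_eq_neq key => ->.
  by rewrite mulr0 mulf_neq0 // tetra_root_simple.
by apply/eqP; rewrite eqr_div // ?tetra_root_simple // key mulrC.
Qed.

End TetraRoot.

Section BinetTerm.
Variables (F : numFieldType) (V : int -> F) (r : F).
Hypotheses (hV : tetranacci_rec V) (hr : r ^+ 4 = r ^+ 3 + r ^+ 2 + r + 1).

Lemma tetra_window_rootS m : tetra_window V (m + 1) r = r * tetra_window V m r.
Proof. by rewrite tetra_windowS // hr; ring. Qed.

Lemma tetra_window_root m : tetra_window V m r = r ^ (m - 3) * tetra_window V 3 r.
Proof.
have r0 := tetra_root_neq0 hr.
pose f k := r ^ (3 - k) * tetra_window V k r.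
have fS k : f (k + 1) = f k.
  rewrite /f tetra_window_rootS.
  have -> : 3 - k = 3 - (k + 1) + 1 by rewrite opprD addrA subrK.
  by rewrite (expfzDr _ 1) // expr1z mulrA.
have f3 : f 3 = tetra_window V 3 r by rewrite /f subrr expr0z mul1r.
rewrite -f3 (int_shift_invariant fS 3) -(int_shift_invariant fS m) /f.
by rewrite mulrA -expfzDr // subrKA subrr expr0z mul1r.
Qed.

Lemma Kcoef_binet_term m :
  Kcoef V r * r ^ (m - 6)
  = tetra_window V m r / (4 * r ^+ 3 - 3 * r ^+ 2 - 2 * r - 1).
Proof.
have r0 := tetra_root_neq0 hr.
have pow3 : r ^ (m - 3) = r ^+ 3 * r ^ (m - 6).
  by rewrite exprnP -expfzDr //; congr (_ ^ _); ring.
rewrite /Kcoef tetra_root_ratio // -tetra_window3 // tetra_window_root pow3.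
ring.
Qed.

End BinetTerm.

Lemma lagrange_cubic_lead (F : fieldType) (a b c d x3 x2 x1 x0 : F) :
  a != b -> a != c -> a != d -> b != c -> b != d -> c != d ->
  (x3 * a ^+ 3 + x2 * a ^+ 2 + x1 * a + x0) / ((a - b) * ((a - c) * (a - d)))
  + (x3 * b ^+ 3 + x2 * b ^+ 2 + x1 * b + x0) / ((b - a) * ((b - c) * (b - d)))
  + (x3 * c ^+ 3 + x2 * c ^+ 2 + x1 * c + x0) / ((c - a) * ((c - b) * (c - d)))
  + (x3 * d ^+ 3 + x2 * d ^+ 2 + x1 * d + x0) / ((d - a) * ((d - b) * (d - c)))
  = x3.
Proof.
move=> ab ac ad bc bd cd.
field; rewrite !subr_eq0 (eq_sym b a) (eq_sym c a) (eq_sym d a).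
by rewrite (eq_sym c b) (eq_sym d b) (eq_sym d c) ab ac ad bc bd cd.
Qed.

Lemma horner_deriv_XsubCM (R : comNzRingType) (a : R) (q : {poly R}) :
  ((('X - a%:P) * q)^`()).[a] = q.[a].
Proof. by rewrite derivM derivXsubC !hornerE subrr mul0r addr0. Qed.

Lemma tetra_poly_factor_root (R : comNzRingType) (a : R) (q : {poly R}) :
  'X^4 - 'X^3 - 'X^2 - 'X - 1 = ('X - a%:P) * q ->
  a ^+ 4 = a ^+ 3 + a ^+ 2 + a + 1
  /\ 4 * a ^+ 3 - 3 * a ^+ 2 - 2 * a - 1 = q.[a].
Proof.
move=> hq; split.
  have := congr1 (horner^~ a) hq; rewrite hornerM hornerXsubC subrr mul0r.
  by rewrite !hornerE => h; apply/eqP; rewrite -subr_eq0 !opprD !addrA h.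
rewrite -(horner_deriv_XsubCM a q) -hq !derivE !hornerE /=.
ring.
Qed.

Lemma tetranacci_binet (F : numFieldType) (V : int -> F) (a b c d : F) :
  tetranacci_rec V ->
  ('X^4 - 'X^3 - 'X^2 - 'X - 1 : {poly F})
    = \prod_(r <- [:: a; b; c; d]) ('X - r%:P) ->
  forall m, V m = Kcoef V a * a ^ (m - 6) + Kcoef V b * b ^ (m - 6)
                  + Kcoef V c * c ^ (m - 6) + Kcoef V d * d ^ (m - 6).
Proof.
rewrite !big_cons big_nil mulr1 => hV hp m.
set p := 'X^4 - 'X^3 - 'X^2 - 'X - 1 in hp.
have hpb : p = ('X - b%:P) * (('X - a%:P) * (('X - c%:P) * ('X - d%:P))).
  by rewrite hp; ring.
have hpc : p = ('X - c%:P) * (('X - a%:P) * (('X - b%:P) * ('X - d%:P))).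
  by rewrite hp; ring.
have hpd : p = ('X - d%:P) * (('X - a%:P) * (('X - b%:P) * ('X - c%:P))).
  by rewrite hp; ring.
have [ha Da] := tetra_poly_factor_root hp.
have [hb Db] := tetra_poly_factor_root hpb.
have [hc Dc] := tetra_poly_factor_root hpc.
have [hd Dd] := tetra_poly_factor_root hpd.
rewrite !hornerM !hornerXsubC in Da Db Dc Dd.
move: (tetra_root_simple ha) (tetra_root_simple hb) (tetra_root_simple hc).
rewrite Da Db Dc !mulf_eq0 !negb_or !subr_eq0.
move=> /and3P[ab ac ad] /and3P[_ bc bd] /and3P[_ _ cd].
by rewrite !Kcoef_binet_term // Da Db Dc Dd lagrange_cubic_lead.
Qed.

Theorem mainTheorem2 (C : numClosedFieldType) (c0 c1 c2 c3 : C)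
  (V : int -> C) (alpha beta gamma delta : C) :
  ~ (c0 = 0 /\ c1 = 0 /\ c2 = 0 /\ c3 = 0) ->
  V 0 = c0 -> V 1 = c1 -> V 2 = c2 -> V 3 = c3 ->
  tetranacci_rec V ->
  ('X^4 - 'X^3 - 'X^2 - 'X - 1 : {poly C}) =
    \prod_(r <- [:: alpha; beta; gamma; delta]) ('X - r%:P) ->
  forall n : int,
    GV V n =
      (Kcoef V alpha * alpha ^ (n - 6) + Kcoef V beta * beta ^ (n - 6)
       + Kcoef V gamma * gamma ^ (n - 6) + Kcoef V delta * delta ^ (n - 6))
      + 'i * (Kcoef V alpha * alpha ^ (n - 7) + Kcoef V beta * beta ^ (n - 7)
       + Kcoef V gamma * gamma ^ (n - 7) + Kcoef V delta * delta ^ (n - 7)).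
Proof.
(* The initial values c_j and their nondegeneracy play no role. *)
move=> _ _ _ _ _ hV hp n.
have binet := tetranacci_binet hV hp.
rewrite /GV (binet n) (binet (n - 1)).
by have -> : n - 1 - 6 = n - 7 by rewrite -addrA.
Qed.
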